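(* Let $(\bm n;\bm m)\in\mathfrak C_{2r}$ and assume that $(\bm n;\bm m)$, every $(\bm n+\bm e_j;\bm m)$ ($1\le j\le r$), and every $(\bm n-\bm e_j;\bm m)$ that lies in $\mathfrak C_{2r}$ are normal. Use the convention $\Phi_{\bm n-\bm e_j;\bm m}:=0$ when $(\bm n-\bm e_j;\bm m)\notin\mathfrak C_{2r}$. Then: (a) for every $k$ with $(\bm n-\bm e_k;\bm m)\in\mathfrak C_{2r}$: $\Phi^*_{\bm n;\bm m}(z)=\Phi^*_{\bm n-\bm e_k;\bm m}(z)+\beta_{\bm n;\bm m}z\Phi_{\bm n-\bm e_k;\bm m}(z)$; (b) for every $k=1,\dots,r$: $\bm\Xi^*_{\bm n;\bm m}(z)=\bm\Xi^*_{\bm n+\bm e_k;\bm m}(z)-\alpha_{\bm n;\bm m}z\bm\Xi_{\bm n+\bm e_k;\bm m}(z)$; (c) there exist complex numbers $\rho_{\bm n;\bm m,1},\dots,\rho_{\bm n;\bm m,r}$ (with $\rho_{\bm n;\bm m,j}=0$ when $(\bm n-\bm e_j;\bm m)\notin\mathfrak C_{2r}$) such that $\Phi_{\bm n;\bm m}(z)=\alpha_{\bm n;\bm m}\Phi^*_{\bm n;\bm m}(z)+\sum_{j=1}^r\rho_{\bm n;\bm m,j}z\Phi_{\bm n-\bm e_j;\bm m}(z)$ and $\bm\Xi_{\bm n;\bm m}(z)=-\beta_{\bm n;\bm m}\bm\Xi^*_{\bm n;\bm m}(z)+\sum_{j=1}^r\rho_{\bm n;\bm m,j}z\bm\Xi_{\bm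 n+\bm e_j;\bm m}(z)$.
   Context: Fix $r\ge1$; $\bm e_j$ is the $j$-th standard unit vector of $\mathbb Z^r$; for $\bm v\in\mathbb Z^r$, $|\bm v|=v_1+\dots+v_r$ (signed). Let $c_{k,j}\in\mathbb C$ ($k\in\mathbb Z$, $1\le j\le r$) and let $L_j$ be the linear functional on complex Laurent polynomials with $L_j[w^{-k}]=c_{k,j}$. $\mathfrak C_{2r}=\{(\bm n;\bm m)\in\mathbb Z^r\times\mathbb Z^r:n_j+m_j\ge0\ \forall j\}$. For $(\bm n;\bm m)\in\mathfrak C_{2r}$, $\bm n\ne-\bm m$, let $T_{\bm n;\bm m}$ be the square matrix of size $|\bm n|+|\bm m|$ with rows indexed by pairs $(j,k)$, $1\le j\le r$, $-m_j\le k\le n_j-1$ (ordered by $j$, then increasing $k$), columns indexed by $i=-|\bm m|,\dots,|\bm n|-1$, entries $c_{k-i,j}$; $T_{\bm n;-\bm n}:=1$. $(\bm n;\bm m)$ is normal if $\det T_{\bm n;\bm m}\ne0$. For normal $(\bm n;\bm m)$, $\bm n\ne-\bm m$: $\Phi_{\bm n;\bm m}$ is the unique Laurent polynomial in $\operatorname{span}\{z^k\}_{k=-|\bm m|}^{|\bm n|}$ with $z^{|\bm n|}$-coefficient $1$ and $L_j[\Phi_{\bm n;\bm m}(w)w^{-k}]=0$ for $-m_j\le k\le n_j-1$, all $j$; $\Phi^*_{\bm n;\bm m}$ is the unique one in that span with $z^{-|\bm m|}$-coefficient $1$ and $L_j[\Phi^*_{\bm n;\bm m}(w)w^{-k}]=0$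 for $-m_j+1\le k\le n_j$, all $j$; $\bm\Xi_{\bm n;\bm m}=(\Xi_{\bm n;\bm m,j})_{j=1}^r$ is the unique vector with $\Xi_{\bm n;\bm m,j}\in\operatorname{span}\{z^k\}_{k=-n_j}^{m_j-1}$, $\sum_jL_j[\Xi_{\bm n;\bm m,j}(w)w^{-k}]=0$ for $-|\bm n|+1\le k\le|\bm m|-1$ and $=1$ for $k=-|\bm n|$; $\bm\Xi^*_{\bm n;\bm m}$ is the unique vector with $\Xi^*_{\bm n;\bm m,j}\in\operatorname{span}\{z^k\}_{k=-n_j+1}^{m_j}$, the same vanishing conditions, and $=1$ for $k=|\bm m|$. For $\bm n=-\bm m$: $\Phi=\Phi^*=1$, $\bm\Xi=\bm\Xi^*=\bm0$. $\alpha_{\bm n;\bm m}$ := $z^{-|\bm m|}$-coefficient of $\Phi_{\bm n;\bm m}$; $\beta_{\bm n;\bm m}$ := $z^{|\bm n|}$-coefficient of $\Phi^*_{\bm n;\bm m}$. *)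

(* Laurent polynomials over a field F are represented by their
   coefficient functions  int -> F  (p k = coefficient of z^k); membership in
   span{z^k}_{k=lo}^{hi} is the predicate [in_span lo hi p]. *)
From HB Require Import structures.
From mathcomp Require Import all_boot all_order all_algebra.
Set Implicit Arguments. Unset Strict Implicit. Unset Printing Implicit Defensive.
Import Order.TTheory GRing.Theory Num.Theory.
Local Open Scope ring_scope.

Section Defs.
Variables (F : fieldType) (r : nat).

Definition vsum (v : 'I_r -> int) : int := \sum_(j < r) v j.

Definition addej (v : 'I_r -> int) (j : 'I_r) : 'I_r -> int :=
  fun i => v i + (i == j)%:Z.
Definition subej (v : 'I_r -> int) (j : 'I_r) : 'I_r -> int :=
  fun i => v i - (i == j)%:Z.

Definition inC (n m : 'I_r -> int) : bool := [forall j, 0 <= n j + m j].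

Definition antidiag (n m : 'I_r -> int) : bool := [forall j, n j == - m j].

Definition in_span (lo hi : int) (p : int -> F) : Prop :=
  forall k : int, (k < lo) || (hi < k) -> p k = 0.

Definition zmul (p : int -> F) : int -> F := fun k => p (k - 1).

(* For p in span{z^i}_{i=lo}^{hi}:  L_j[p(w) w^{-k}] = sum_{i=lo}^{hi} p_i c_{k-i,j},
   where L_j[w^{-k}] = c k j. *)
Definition Lw (c : int -> 'I_r -> F) (j : 'I_r) (lo hi : int) (p : int -> F)
    (k : int) : F :=
  if lo <= hi then
    \sum_(t < absz (hi - lo + 1)) p (lo + t%:Z) * c (k - (lo + t%:Z)) j
  else 0.

(* Rows of T_{n;m}, indexed by (j,k), j increasing, then k = -m_j..n_j-1
   increasing; each row is given as the function  i |-> c_{k-i,j}. *)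
Definition Trows (c : int -> 'I_r -> F) (n m : 'I_r -> int) : seq (int -> F) :=
  flatten [seq [seq (fun i : int => c (k - i) j)
               | k <- [seq - m j + t%:Z | t <- iota 0 (absz (n j + m j))]]
          | j <- enum 'I_r].

(* T_{n;m}: square of size |n|+|m|, columns i = -|m|, ..., |n|-1.
   (For n = -m it is the empty matrix, whose determinant is 1.) *)
Definition Tmat (c : int -> 'I_r -> F) (n m : 'I_r -> int) :
    'M[F]_(absz (vsum n + vsum m)) :=
  \matrix_(p, q) nth (fun _ => 0) (Trows c n m) p (- vsum m + (q : nat)%:Z).

Definition normal (c : int -> 'I_r -> F) (n m : 'I_r -> int) : bool :=
  \det (Tmat c n m) != 0.

Definition isPhi (c : int -> 'I_r -> F) (n m : 'I_r -> int) (p : int -> F) : Prop :=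
  [/\ in_span (- vsum m) (vsum n) p, p (vsum n) = 1 &
      forall (j : 'I_r) (k : int), - m j <= k <= n j - 1 ->
        Lw c j (- vsum m) (vsum n) p k = 0].

Definition isPhist (c : int -> 'I_r -> F) (n m : 'I_r -> int) (p : int -> F) : Prop :=
  [/\ in_span (- vsum m) (vsum n) p, p (- vsum m) = 1 &
      forall (j : 'I_r) (k : int), - m j + 1 <= k <= n j ->
        Lw c j (- vsum m) (vsum n) p k = 0].

Definition isXi (c : int -> 'I_r -> F) (n m : 'I_r -> int)
    (X : 'I_r -> int -> F) : Prop :=
  if antidiag n m then forall j k, X j k = 0 else
  [/\ forall j, in_span (- n j) (m j - 1) (X j),
      forall k : int, - vsum n + 1 <= k <= vsum m - 1 ->
        \sum_(j < r) Lw c j (- n j) (m j - 1) (X j) k = 0 &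
      \sum_(j < r) Lw c j (- n j) (m j - 1) (X j) (- vsum n) = 1].

Definition isXist (c : int -> 'I_r -> F) (n m : 'I_r -> int)
    (X : 'I_r -> int -> F) : Prop :=
  if antidiag n m then forall j k, X j k = 0 else
  [/\ forall j, in_span (- n j + 1) (m j) (X j),
      forall k : int, - vsum n + 1 <= k <= vsum m - 1 ->
        \sum_(j < r) Lw c j (- n j + 1) (m j) (X j) k = 0 &
      \sum_(j < r) Lw c j (- n j + 1) (m j) (X j) (vsum m) = 1].

End Defs.

(* Each identity says that some combination of the given Laurent polynomials
   vanishes.  Shifted by a power of z, the combination lies in the span allowed
   for a Phi (resp. a Xi) at a normal index and satisfies all the homogeneous
   orthogonality conditions there, so it is zero because T_{n;m} (resp. its
   transpose) is invertible.  The constants come from the pairing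
     sum_y p_y sum_l L_l[X_l(w) w^y] = sum_l sum_x X_{l,x} L_l[p(w) w^x],
   which relates the extreme moments of Xi and Xi* to alpha and beta, and shows
   that the z^{-n_j}-coefficient of Xi_{n;m,j} times L_j[Phi_{n-e_j;m}(w) w^{1-n_j}]
   is 1.  Hence rho_j = L_j[Phi_{n;m}(w) w^{-n_j}] times that coefficient. *)

From HB Require Import structures.
From mathcomp Require Import all_boot all_order all_algebra.
From mathcomp Require Import zify ring.
Set Implicit Arguments. Unset Strict Implicit. Unset Printing Implicit Defensive.
Import Order.TTheory GRing.Theory Num.Theory.
Local Open Scope ring_scope.

Definition irange (lo hi : int) : seq int :=
  if lo <= hi then [seq lo + t%:Z | t <- iota 0 (absz (hi - lo + 1))] else [::].

Lemma mem_irange lo hi i : (i \in irange lo hi) = (lo <= i <= hi).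
Proof.
rewrite /irange; case: ifP => hlo; last first.
  by rewrite in_nil; apply/esym/negbTE/negP => /andP[? ?]; move/negbT: hlo; lia.
apply/mapP/idP => [[t] | /andP[? ?]].
  by rewrite mem_iota => /andP[_ ?] ->; apply/andP; split; lia.
by exists (absz (i - lo)); [rewrite mem_iota; lia | lia].
Qed.

Lemma irange_uniq lo hi : uniq (irange lo hi).
Proof.
rewrite /irange; case: ifP => // _.
by rewrite map_inj_uniq ?iota_uniq // => s t /addrI; lia.
Qed.

Lemma size_irange lo hi : lo <= hi + 1 -> size (irange lo hi) = absz (hi - lo + 1).
Proof.
rewrite /irange; case: ifP => [_ _ | /negbT ? ?]; first by rewrite size_map size_iota.
by apply/esym/eqP; rewrite absz_eq0; lia.
Qed.

Lemma perm_irange (s : seq int) lo hi :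
  uniq s -> (forall i, (i \in s) = (lo <= i <= hi)) -> perm_eq s (irange lo hi).
Proof.
by move=> us hs; apply: uniq_perm; rewrite ?irange_uniq // => i; rewrite hs mem_irange.
Qed.

Section BigIrange.
Variables (R : nmodType) (f : int -> R).

Lemma big_irange_sub lo hi a b : lo <= a -> b <= hi ->
  (forall i, lo <= i <= hi -> (i < a) || (b < i) -> f i = 0) ->
  \sum_(i <- irange lo hi) f i = \sum_(i <- irange a b) f i.
Proof.
move=> ha hb hf; rewrite (bigID (fun i => a <= i <= b)) /=.
rewrite [X in _ + X]big1_seq ?addr0 => [|i /andP[hab]]; last first.
  by rewrite mem_irange => hi'; apply: hf => //; move: hab; rewrite negb_and -!ltNge.
rewrite -big_filter; apply/perm_big/perm_irange => [|i].
  by rewrite filter_uniq ?irange_uniq.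
rewrite mem_filter mem_irange; apply: andb_idr => /andP[? ?].
by apply/andP; split; lia.
Qed.

Lemma big_irange1 a : \sum_(i <- irange a a) f i = f a.
Proof. by rewrite /irange lexx subrr add0r big_seq1 addr0. Qed.

Lemma big_irange_single lo hi x : lo <= x <= hi ->
  (forall i, lo <= i <= hi -> i != x -> f i = 0) ->
  \sum_(i <- irange lo hi) f i = f x.
Proof.
move=> /andP[? ?] hf; rewrite (@big_irange_sub _ _ x x) ?big_irange1 // => i hi' hx.
by apply: hf => //; move: hx; lia.
Qed.

Lemma big_irange_eq0 lo hi :
  (forall i, lo <= i <= hi -> f i = 0) -> \sum_(i <- irange lo hi) f i = 0.
Proof. by move=> hf; apply: big1_seq => i /andP[_]; rewrite mem_irange; apply: hf. Qed.

Lemma big_irange_recl lo hi : lo <= hi ->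
  \sum_(i <- irange lo hi) f i = f lo + \sum_(i <- irange (lo + 1) hi) f i.
Proof.
move=> hlo; rewrite -[_ + _](big_cons _ _ _ _ xpredT) /=.
apply/perm_big; rewrite perm_sym; apply: perm_irange.
  by rewrite /= irange_uniq mem_irange andbT; apply/negP => /andP[? _]; lia.
move=> i; rewrite in_cons mem_irange; apply/idP/idP.
  by case/orP => [/eqP ->|/andP[? ?]]; apply/andP; split; lia.
by move=> /andP[? ?]; case: (eqVneq i lo) => //= ?; apply/andP; split; lia.
Qed.

Lemma big_irange_shift lo hi d :
  \sum_(i <- irange lo hi) f (i + d) = \sum_(i <- irange (lo + d) (hi + d)) f i.
Proof.
rewrite -(big_map (+%R^~ d) xpredT); apply/perm_big/perm_irange => [|i].
  by rewrite map_inj_uniq ?irange_uniq // => x y /addIr.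
apply/mapP/idP => [[x] | /andP[? ?]].
  by rewrite mem_irange => /andP[? ?] ->; apply/andP; split; lia.
by exists (i - d); rewrite ?subrK // mem_irange; apply/andP; split; lia.
Qed.

Lemma big_irange_rev lo hi :
  \sum_(i <- irange lo hi) f (- i - 1) = \sum_(i <- irange (- hi - 1) (- lo - 1)) f i.
Proof.
rewrite -(big_map (fun i => - i - 1) xpredT); apply/perm_big/perm_irange => [|i].
  by rewrite map_inj_uniq ?irange_uniq // => x y /addIr /oppr_inj.
apply/mapP/idP => [[x] | /andP[? ?]].
  by rewrite mem_irange => /andP[? ?] ->; apply/andP; split; lia.
by exists (- i - 1); [rewrite mem_irange; apply/andP; split | ]; lia.
Qed.

End BigIrange.

Section Moments.
Variables (F : fieldType) (r : nat) (c : int -> 'I_r -> F).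
Implicit Types (p : int -> F) (lo hi k : int) (X Y : 'I_r -> int -> F).

Lemma LwE j lo hi p k : Lw c j lo hi p k = \sum_(i <- irange lo hi) p i * c (k - i) j.
Proof.
rewrite /Lw /irange; case: ifP => _; last by rewrite big_nil.
by rewrite big_map -(big_mkord xpredT (fun t : nat => p (lo + t%:Z) * c (k - (lo + t%:Z)) j))
  /index_iota subn0.
Qed.

Lemma Lw_span j lo hi a b p k : in_span a b p -> lo <= a -> b <= hi ->
  Lw c j lo hi p k = Lw c j a b p k.
Proof.
by move=> hp ha hb; rewrite !LwE; apply: big_irange_sub => // i _ /hp ->; rewrite mul0r.
Qed.

Lemma Lw_shift j lo hi a b p d k : in_span a b p -> lo + d <= a -> b <= hi + d ->
  Lw c j lo hi (fun i => p (i + d)) k = Lw c j a b p (k + d).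
Proof.
move=> hp ha hb; rewrite -(Lw_span _ _ hp ha hb) !LwE.
rewrite -(big_irange_shift (fun i => p i * c (k + d - i) j)).
by apply: eq_bigr => i _; rewrite opprD addrACA subrr addr0.
Qed.

Lemma LwD j lo hi p q k :
  Lw c j lo hi (fun i => p i + q i) k = Lw c j lo hi p k + Lw c j lo hi q k.
Proof. by rewrite !LwE -big_split; apply: eq_bigr => i _; rewrite mulrDl. Qed.

Lemma LwB j lo hi p q k :
  Lw c j lo hi (fun i => p i - q i) k = Lw c j lo hi p k - Lw c j lo hi q k.
Proof. by rewrite !LwE -sumrB; apply: eq_bigr => i _; rewrite mulrBl. Qed.

Lemma LwZ j lo hi a p k : Lw c j lo hi (fun i => a * p i) k = a * Lw c j lo hi p k.
Proof. by rewrite !LwE mulr_sumr; apply: eq_bigr => i _; rewrite mulrA. Qed.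

Lemma Lw_sum j lo hi (P : 'I_r -> int -> F) k :
  Lw c j lo hi (fun i => \sum_(l < r) P l i) k = \sum_(l < r) Lw c j lo hi (P l) k.
Proof.
under eq_bigr => l _ do rewrite LwE.
by rewrite LwE exchange_big; apply: eq_bigr => i _; rewrite mulr_suml.
Qed.

Lemma Lw_eq0 j lo hi p k : (forall i, p i = 0) -> Lw c j lo hi p k = 0.
Proof. by move=> hp; rewrite LwE big1 // => i _; rewrite hp mul0r. Qed.

Definition Lvec (lo hi : 'I_r -> int) (X : 'I_r -> int -> F) (k : int) : F :=
  \sum_(j < r) Lw c j (lo j) (hi j) (X j) k.

Lemma Lvec_span (lo hi a b : 'I_r -> int) X k :
  (forall j, in_span (a j) (b j) (X j)) -> (forall j, lo j <= a j) -> (forall j, b j <= hi j) ->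
  Lvec lo hi X k = Lvec a b X k.
Proof. by move=> hX ha hb; apply: eq_bigr => j _; apply: Lw_span. Qed.

Lemma Lvec_shift (lo hi a b : 'I_r -> int) X d k :
  (forall j, in_span (a j) (b j) (X j)) ->
  (forall j, lo j + d <= a j) -> (forall j, b j <= hi j + d) ->
  Lvec lo hi (fun j i => X j (i + d)) k = Lvec a b X (k + d).
Proof. by move=> hX ha hb; apply: eq_bigr => j _; apply: Lw_shift. Qed.

Lemma LvecD (lo hi : 'I_r -> int) X Y k :
  Lvec lo hi (fun j i => X j i + Y j i) k = Lvec lo hi X k + Lvec lo hi Y k.
Proof. by rewrite -big_split; apply: eq_bigr => j _; apply: LwD. Qed.

Lemma LvecB (lo hi : 'I_r -> int) X Y k :
  Lvec lo hi (fun j i => X j i - Y j i) k = Lvec lo hi X k - Lvec lo hi Y k.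
Proof. by rewrite -sumrB; apply: eq_bigr => j _; apply: LwB. Qed.

Lemma LvecZ (lo hi : 'I_r -> int) a X k :
  Lvec lo hi (fun j i => a * X j i) k = a * Lvec lo hi X k.
Proof. by rewrite mulr_sumr; apply: eq_bigr => j _; apply: LwZ. Qed.

Lemma Lvec_sum (lo hi : 'I_r -> int) (P : 'I_r -> 'I_r -> int -> F) k :
  Lvec lo hi (fun j i => \sum_(l < r) P l j i) k = \sum_(l < r) Lvec lo hi (P l) k.
Proof. by rewrite exchange_big; apply: eq_bigr => j _; apply: Lw_sum. Qed.

Lemma Lw_pairing p a b (lo hi : 'I_r -> int) X :
  \sum_(y <- irange a b) p y * Lvec lo hi X (- y) =
  \sum_(l < r) \sum_(x <- irange (lo l) (hi l)) X l x * Lw c l a b p (- x).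
Proof.
under eq_bigr => y _ do rewrite mulr_sumr.
rewrite exchange_big; apply: eq_bigr => l _ /=.
under eq_bigr => y _ do rewrite LwE mulr_sumr.
rewrite exchange_big; apply: eq_bigr => x _ /=.
rewrite LwE mulr_sumr; apply: eq_bigr => y _.
by rewrite mulrCA; congr (_ * (_ * c _ _)); ring.
Qed.

End Moments.

Section IndexVectors.
Variable r : nat.
Implicit Types (n m : 'I_r -> int) (i j : 'I_r).

Lemma eq_vsum n n' : n =1 n' -> vsum n = vsum n'.
Proof. by move=> e; apply: eq_bigr => i _. Qed.

Lemma sum_eqz j : \sum_i (i == j)%:Z = 1.
Proof. by rewrite (bigD1 j) //= eqxx big1 ?addr0 // => i /negbTE ->. Qed.

Lemma vsum_addej n j : vsum (addej n j) = vsum n + 1.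
Proof. by rewrite /vsum big_split /= sum_eqz. Qed.

Lemma vsum_subej n j : vsum (subej n j) = vsum n - 1.
Proof. by rewrite /vsum sumrB sum_eqz. Qed.

Lemma addejE n j i : addej n j i = n i + (i == j)%:Z.
Proof. by []. Qed.

Lemma subejE n j i : subej n j i = n i - (i == j)%:Z.
Proof. by []. Qed.

Lemma addej_eq n j : addej n j j = n j + 1.
Proof. by rewrite addejE eqxx. Qed.

Lemma addej_neq n j i : i != j -> addej n j i = n i.
Proof. by rewrite addejE => /negbTE ->; rewrite addr0. Qed.

Lemma addej_ge n j i : n i <= addej n j i.
Proof. by rewrite addejE; lia. Qed.

Lemma addej_le n j i : addej n j i <= n i + 1.
Proof. by rewrite addejE; lia. Qed.

Lemma addejK n j : subej (addej n j) j =1 n.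
Proof. by move=> i; rewrite subejE addejE addrK. Qed.

Lemma vsumD n m : vsum n + vsum m = \sum_i (n i + m i).
Proof. by rewrite big_split. Qed.

Lemma vsum_ge0 n m : inC n m -> 0 <= vsum n + vsum m.
Proof. by move=> /forallP hC; rewrite vsumD sumr_ge0. Qed.

Lemma inC_subej n m j : inC n m -> inC (subej n j) m = (0 < n j + m j).
Proof.
move=> /forallP hC; apply/forallP/idP => [/(_ j) | hj i].
  by rewrite subejE eqxx; lia.
by rewrite subejE; case: eqVneq => [->|_] /=; have := hC i; lia.
Qed.

Lemma inC_addej n m j : inC n m -> inC (addej n j) m.
Proof. by move=> /forallP hC; apply/forallP => i; rewrite addejE; have := hC i; lia. Qed.

Lemma vsum_gt0 n m : inC n m -> ~~ antidiag n m -> 0 < vsum n + vsum m.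
Proof.
move=> hC /forallPn[i /eqP ni]; rewrite lt_def vsum_ge0 // andbT.
move/forallP: hC => hC; rewrite vsumD psumr_eq0 => [|j _]; last exact: hC.
by apply/negP => /allP /(_ i (mem_index_enum i)) /=; have := hC i; lia.
Qed.

Lemma vsum_antidiag n m : antidiag n m -> vsum n + vsum m = 0.
Proof. by move=> /forallP h; rewrite vsumD big1 // => i _; have /eqP := h i; lia. Qed.

Lemma antidiagN n m j : 0 < n j + m j -> ~~ antidiag n m.
Proof. by move=> hj; apply/forallPn; exists j; apply/eqP; lia. Qed.

Lemma addej_antidiagN n m j : inC n m -> ~~ antidiag (addej n j) m.
Proof. by move=> /forallP hC; apply: (antidiagN (j := j)); rewrite addej_eq; have := hC j; lia. Qed.

End IndexVectors.

Section Tmatrix.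
Variables (F : fieldType) (r : nat) (c : int -> 'I_r -> F).
Implicit Types n m : 'I_r -> int.

Definition Tindex n m : seq ('I_r * int) :=
  flatten [seq [seq (j, k) | k <- irange (- m j) (n j - 1)] | j <- enum 'I_r].

Lemma mem_Tindex n m j k : ((j, k) \in Tindex n m) = (- m j <= k <= n j - 1).
Proof.
apply/flatten_mapP/idP => [[j' _ /mapP[k' + [-> ->]]] | hk].
  by rewrite mem_irange.
by exists j; rewrite ?mem_enum //; apply/mapP; exists k; rewrite ?mem_irange.
Qed.

Lemma size_Tindex n m : inC n m -> size (Tindex n m) = absz (vsum n + vsum m).
Proof.
move=> /forallP hC; rewrite size_flatten /shape sumnE !big_map -/(index_enum _).
suff -> : vsum n + vsum m = (\sum_(j < r) absz (n j + m j)%R)%N%:Z.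
  by apply: eq_bigr => j _; rewrite size_map size_irange //; have := hC j; lia.
rewrite vsumD (big_morph Posz PoszD (erefl 0%:Z)).
by apply: eq_bigr => j _ /=; have := hC j; lia.
Qed.

Lemma big_Tindex n m (G : 'I_r * int -> F) :
  \sum_(jk <- Tindex n m) G jk = \sum_(j < r) \sum_(k <- irange (- m j) (n j - 1)) G (j, k).
Proof.
by rewrite big_flatten /= big_map big_enum /=; apply: eq_bigr => j _; rewrite big_map.
Qed.

Lemma Trows_Tindex n m : inC n m ->
  Trows c n m = [seq (fun i => c (jk.2 - i) jk.1) | jk <- Tindex n m].
Proof.
move=> /forallP hC; rewrite /Trows map_flatten; congr flatten; rewrite -[RHS]map_comp.
apply: eq_map => j /=; rewrite -map_comp /irange; case: ifP => hj.
  have -> : absz (n j - 1 - - m j + 1) = absz (n j + m j) by congr absz; ring.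
  by rewrite -!map_comp.
by have -> : absz (n j + m j) = 0%N by have := hC j; move/negbT: hj; lia.
Qed.

Lemma TmatE n m x0 (p q : 'I_(absz (vsum n + vsum m))) : inC n m ->
  let jk := nth x0 (Tindex n m) p in
  Tmat c n m p q = c (jk.2 - (- vsum m + q%:Z)) jk.1.
Proof. by move=> hC; rewrite mxE Trows_Tindex // (nth_map x0) ?size_Tindex. Qed.

Lemma Tmat_mul_col n m x0 q (p : 'I_(absz (vsum n + vsum m))) : inC n m ->
  let jk := nth x0 (Tindex n m) p in
  (Tmat c n m *m \col_t q (- vsum m + t%:Z)) p 0
    = Lw c jk.1 (- vsum m) (vsum n - 1) q jk.2.
Proof.
move=> hC /=; rewrite mxE /Lw ifT; last by have := ltn_ord p; have := vsum_ge0 hC; lia.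
have -> : absz (vsum n - 1 - - vsum m + 1) = absz (vsum n + vsum m) by congr absz; ring.
by apply: eq_bigr => t _; rewrite (TmatE x0) // mxE mulrC.
Qed.

Lemma row_mul_Tmat n m x0 (X : 'I_r -> int -> F) (t : 'I_(absz (vsum n + vsum m))) :
  inC n m ->
  ((\row_p let jk := nth x0 (Tindex n m) p in X jk.1 (- jk.2 - 1)) *m Tmat c n m) 0 t
    = Lvec c (fun j => - n j) (fun j => m j - 1) X (vsum m - t%:Z - 1).
Proof.
move=> hC; rewrite mxE.
under eq_bigr => p _ do rewrite (TmatE x0) // mxE.
pose G (jk : 'I_r * int) := X jk.1 (- jk.2 - 1) * c (jk.2 - (- vsum m + t%:Z)) jk.1.
transitivity (\sum_(jk <- Tindex n m) G jk).
  by rewrite [RHS](big_nth x0) big_mkord size_Tindex.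
rewrite big_Tindex; apply: eq_bigr => j _.
have -> : - n j = - (n j - 1) - 1 by ring.
have -> : m j - 1 = - - m j - 1 by ring.
rewrite LwE -big_irange_rev.
by apply: eq_bigr => k _; rewrite /G /=; congr (_ * c _ j); ring.
Qed.

Lemma Phi_moments_eq0 n m q : inC n m -> normal c n m ->
  in_span (- vsum m) (vsum n - 1) q ->
  (forall j k, - m j <= k <= n j - 1 -> Lw c j (- vsum m) (vsum n - 1) q k = 0) ->
  forall i, q i = 0.
Proof.
move=> hC hN hq hL i.
have [/hq // | ] := boolP ((i < - vsum m) || (vsum n - 1 < i)).
rewrite negb_or -!leNgt => /andP[? ?].
have hd : (absz (i + vsum m)%R < absz (vsum n + vsum m)%R)%N by lia.
have : (0 < size (Tindex n m))%N by rewrite size_Tindex //; lia.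
case: (Tindex n m) => // x0 _ _.
pose v : 'cV[F]_(absz (vsum n + vsum m)) := \col_t q (- vsum m + t%:Z).
have Tv0 : Tmat c n m *m v = 0.
  apply/matrixP => p z; rewrite ord1 (Tmat_mul_col x0) // mxE.
  have : (p < size (Tindex n m))%N by rewrite size_Tindex.
  by move/(mem_nth x0); case: (nth _ _ _) => j k; rewrite mem_Tindex; apply: hL.
have hu : Tmat c n m \in unitmx by rewrite unitmxE unitfE.
have v0 : v = 0 by rewrite -(mulKmx hu v) Tv0 mulmx0.
by move/matrixP: v0 => /(_ (Ordinal hd) ord0); rewrite !mxE /= => <-; congr q; lia.
Qed.

Lemma Xi_moments_eq0 n m (X : 'I_r -> int -> F) : inC n m -> normal c n m ->
  (forall j, in_span (- n j) (m j - 1) (X j)) ->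
  (forall k, - vsum n <= k <= vsum m - 1 ->
     Lvec c (fun j => - n j) (fun j => m j - 1) X k = 0) ->
  forall j x, X j x = 0.
Proof.
move=> hC hN hX hL j x.
have [/hX // | ] := boolP ((x < - n j) || (m j - 1 < x)).
rewrite negb_or -!leNgt => /andP[? ?].
set x0 := (j, - x - 1).
have : x0 \in Tindex n m by rewrite mem_Tindex; apply/andP; split; lia.
rewrite -index_mem size_Tindex // => hd.
pose y : 'rV[F]_(absz (vsum n + vsum m)) :=
  \row_p let jk := nth x0 (Tindex n m) p in X jk.1 (- jk.2 - 1).
have yT0 : y *m Tmat c n m = 0.
  apply/matrixP => z t; rewrite ord1 row_mul_Tmat // mxE; apply: hL.
  by have := ltn_ord t; have := vsum_ge0 hC; lia.
have hu : Tmat c n m \in unitmx by rewrite unitmxE unitfE.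
have y0 : y = 0 by rewrite -(mulmxK hu y) yT0 mul0mx.
move/matrixP: y0 => /(_ ord0 (Ordinal hd)); rewrite !mxE /= nth_index; last first.
  by rewrite mem_Tindex; apply/andP; split; lia.
by have -> : - (- x - 1) - 1 = x by ring.
Qed.

End Tmatrix.

Section Biorthogonality.
Variables (F : fieldType) (r : nat) (c : int -> 'I_r -> F).
Implicit Types (n m : 'I_r -> int) (p : int -> F) (X : 'I_r -> int -> F).

Lemma isPhi_ext n n' m p : n =1 n' -> isPhi c n m p -> isPhi c n' m p.
Proof.
by move=> e [hs h1 hL]; rewrite /isPhi -(eq_vsum e); split=> // j k; rewrite -e; apply: hL.
Qed.

Lemma isXi_span n m X : isXi c n m X -> forall j, in_span (- n j) (m j - 1) (X j).
Proof. by rewrite /isXi; case: ifP => _ => [h j k _ | []]. Qed.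

Lemma isXist_span n m X : isXist c n m X -> forall j, in_span (- n j + 1) (m j) (X j).
Proof. by rewrite /isXist; case: ifP => _ => [h j k _ | []]. Qed.

Lemma isXi_moments n m X : isXi c n m X -> forall k, - vsum n + 1 <= k <= vsum m - 1 ->
  Lvec c (fun j => - n j) (fun j => m j - 1) X k = 0.
Proof.
rewrite /isXi; case: ifP => _ => [h k _ | []] //.
by apply: big1 => j _; apply: Lw_eq0; apply: h.
Qed.

Lemma isXist_moments n m X : isXist c n m X -> forall k, - vsum n + 1 <= k <= vsum m - 1 ->
  Lvec c (fun j => - n j + 1) m X k = 0.
Proof.
rewrite /isXist; case: ifP => _ => [h k _ | []] //.
by apply: big1 => j _; apply: Lw_eq0; apply: h.
Qed.

Lemma isXi_lead n m X : ~~ antidiag n m -> isXi c n m X ->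
  Lvec c (fun j => - n j) (fun j => m j - 1) X (- vsum n) = 1.
Proof. by rewrite /isXi => /negbTE ->; case. Qed.

Lemma isXist_lead n m X : ~~ antidiag n m -> isXist c n m X ->
  Lvec c (fun j => - n j + 1) m X (vsum m) = 1.
Proof. by rewrite /isXist => /negbTE ->; case. Qed.

Lemma Lw_pairing_ends n m p (lo hi : 'I_r -> int) X : - vsum m < vsum n ->
  (forall k, - vsum n < k < vsum m -> Lvec c lo hi X k = 0) ->
  (forall j x, lo j <= x <= hi j -> Lw c j (- vsum m) (vsum n) p (- x) = 0) ->
  p (- vsum m) * Lvec c lo hi X (vsum m) + p (vsum n) * Lvec c lo hi X (- vsum n) = 0.
Proof.
move=> hnm hX hp; have := Lw_pairing c p (- vsum m) (vsum n) lo hi X.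
rewrite [RHS]big1 => [|j _]; last by apply: big_irange_eq0 => x hx; rewrite hp ?mulr0.
rewrite big_irange_recl ?opprK; last exact: ltW.
rewrite (big_irange_single (x := vsum n)) //; first last.
- by move=> y hy ny; rewrite hX ?mulr0 //; move: hy ny; lia.
- by apply/andP; split; lia.
Qed.

Lemma Xist_moment_vsum n m P X : inC n m -> ~~ antidiag n m ->
  isPhi c n m P -> isXist c n m X ->
  Lvec c (fun j => - n j + 1) m X (- vsum n) = - P (- vsum m).
Proof.
move=> hC nA [Ps P1 PL] hX; have hnm := vsum_gt0 hC nA.
have := @Lw_pairing_ends n m P (fun j => - n j + 1) m X.
rewrite /= isXist_lead // P1 mulr1 mul1r addrC => E.
apply/eqP; rewrite -addr_eq0 E //; first lia.
  by move=> k hk; apply: (isXist_moments hX); lia.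
by move=> j x hx; apply: PL; lia.
Qed.

Lemma Xi_moment_vsum n m P X : inC n m -> ~~ antidiag n m ->
  isPhist c n m P -> isXi c n m X ->
  Lvec c (fun j => - n j) (fun j => m j - 1) X (vsum m) = - P (vsum n).
Proof.
move=> hC nA [Ps P1 PL] hX; have hnm := vsum_gt0 hC nA.
have := @Lw_pairing_ends n m P (fun j => - n j) (fun j => m j - 1) X.
rewrite /= isXi_lead // P1 mulr1 mul1r => E.
apply/eqP; rewrite -addr_eq0 E //; first lia.
  by move=> k hk; apply: (isXi_moments hX); lia.
by move=> j x hx; apply: PL; lia.
Qed.

Lemma Xi_coef_moment N m l P X : inC N m -> 0 < N l + m l ->
  isPhi c (subej N l) m P -> isXi c N m X ->
  X l (- N l) * Lw c l (- vsum m) (vsum (subej N l)) P (N l - 1) = 1.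
Proof.
move=> hC hl [Ps P1 PL] hX; rewrite vsum_subej in Ps P1 PL *.
have nA := antidiagN hl; have hnm := vsum_gt0 hC nA.
(* Pair z P with X: on the left only y = |N| survives, on the right only (l, -N_l). *)
have := Lw_pairing c (fun y => P (y - 1)) (- vsum m + 1) (vsum N)
  (fun j => - N j) (fun j => m j - 1) X.
rewrite /= (big_irange_single (x := vsum N)); first last.
- by move=> y hy ny; rewrite isXi_moments ?mulr0 //; move: hy ny; lia.
- by apply/andP; split; lia.
rewrite isXi_lead // P1 mulr1 => E.
rewrite [RHS]E (bigD1 l) //= [X in _ = _ + X]big1 ?addr0 => [|j nj].
  rewrite (big_irange_single (x := - N l)) => [ | | x hx nx].
  - by rewrite (Lw_shift c _ _ Ps) ?opprK //; lia.
  - by apply/andP; split; lia.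
  rewrite (Lw_shift c _ _ Ps) ?PL ?mulr0 //; try lia.
  by rewrite subejE eqxx; move: hx nx; lia.
apply: big_irange_eq0 => x hx; rewrite (Lw_shift c _ _ Ps) ?PL ?mulr0 //; try lia.
by rewrite subejE (negbTE nj); lia.
Qed.

End Biorthogonality.

Section Recurrences.
Variables (F : fieldType) (r : nat) (c : int -> 'I_r -> F).
Implicit Types (n m : 'I_r -> int).

Lemma subr2_eq0 (x y z : F) : x - y - z = 0 -> x = y + z.
Proof. by move=> /subr0_eq /eqP; rewrite subr_eq addrC => /eqP. Qed.

Lemma Phist_recurrence n m k Ps PM PsM :
  inC (subej n k) m -> normal c (subej n k) m ->
  isPhist c n m Ps -> isPhi c (subej n k) m PM -> isPhist c (subej n k) m PsM ->
  forall t, Ps t = PsM t + Ps (vsum n) * zmul PM t.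
Proof.
move=> hCk hNk [Ss S1 SL] [Ms M1 ML] [Ts T1 TL] t.
rewrite vsum_subej in Ms M1 ML Ts T1 TL.
pose q i := Ps (i + 1) - PsM (i + 1) - Ps (vsum n) * PM i.
have hq : in_span (- vsum m) (vsum n - 1 - 1) q.
  move=> i /orP[] hi; rewrite /q.
    rewrite Ms ?hi // mulr0 subr0.
    have [-> | ne] := eqVneq (i + 1) (- vsum m); first by rewrite S1 T1 subrr.
    by rewrite Ss ?Ts ?subrr //; move: ne; lia.
  have [e | ne] := eqVneq (i + 1) (vsum n).
    have -> : i = vsum n - 1 by lia.
    by rewrite subrK M1 mulr1 (Ts (vsum n)) ?subr0 ?subrr //; lia.
  by rewrite Ss ?Ts ?Ms ?mulr0 ?subrr //; move: ne; lia.
have hL j k0 : - m j <= k0 <= subej n k j - 1 ->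
    Lw c j (- vsum m) (vsum n - 1 - 1) q k0 = 0.
  move=> hk0; have hkj : subej n k j <= n j by rewrite subejE; lia.
  rewrite -(@Lw_span _ _ c j (- vsum m - 1) (vsum n - 1) _ _ q k0 hq); [ | lia ..].
  rewrite !LwB LwZ (Lw_span c _ _ Ms) ?(Lw_shift c _ _ Ss) ?(Lw_shift c _ _ Ts); [ | lia ..].
  by rewrite SL ?TL ?ML ?mulr0 ?subrr //; lia.
have := Phi_moments_eq0 hCk hNk (q := q); rewrite vsum_subej => /(_ hq hL (t - 1)).
by rewrite /q subrK => /subr2_eq0.
Qed.

Lemma Xist_recurrence n m k P Xs X' Xs' : inC n m -> normal c (addej n k) m ->
  isPhi c n m P -> isXist c n m Xs ->
  isXi c (addej n k) m X' -> isXist c (addej n k) m Xs' ->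
  forall i t, Xs i t = Xs' i t - P (- vsum m) * zmul (X' i) t.
Proof.
move=> hC hNk hP hXs hX' hXs' i t.
have hCk := inC_addej k hC.
have nAk := addej_antidiagN k hC.
have XsS := isXist_span hXs; have X'S := isXi_span hX'; have Xs'S := isXist_span hXs'.
pose Y j x := Xs' j (x + 1) - Xs j (x + 1) - P (- vsum m) * X' j x.
have hY j : in_span (- addej n k j) (m j - 1) (Y j).
  by move=> x hx; rewrite /Y X'S // mulr0 subr0 Xs'S ?XsS ?subrr //; have := addej_ge n k j; lia.
have hL k0 : - vsum (addej n k) <= k0 <= vsum m - 1 ->
    Lvec c (fun j => - addej n k j) (fun j => m j - 1) Y k0 = 0.
  rewrite vsum_addej => hk0.
  rewrite !LvecB LvecZ (Lvec_shift c _ Xs'S) ?(Lvec_shift c _ XsS);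
    [ | by move=> j /=; have := addej_ge n k j; lia ..].
  have X'1 := isXi_lead nAk hX'; rewrite vsum_addej in X'1.
  have [hA | nA] := boolP (antidiag n m).
    have hnm := vsum_antidiag hA; have [_ P1 _] := hP.
    have -> : Lvec c (fun j => - n j + 1) m Xs (k0 + 1) = 0.
      by apply: big1 => j _; apply: Lw_eq0 => x; move: hXs; rewrite /isXist hA.
    have -> : k0 = vsum m - 1 by lia.
    rewrite subrK isXist_lead // (_ : vsum m - 1 = - (vsum n + 1)) ?X'1; last lia.
    by rewrite (_ : - vsum m = vsum n) ?P1 ?subr0 ?mulr1 ?subrr //; lia.
  have hnm := vsum_gt0 hC nA.
  have [-> | nek] := eqVneq k0 (- (vsum n + 1)).
    rewrite X'1 (_ : - (vsum n + 1) + 1 = - vsum n); last by ring.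
    rewrite (Xist_moment_vsum hC nA hP hXs) (isXist_moments hXs') ?vsum_addej; last lia.
    by rewrite sub0r opprK mulr1 subrr.
  rewrite (isXi_moments hX') ?vsum_addej ?mulr0 ?subr0; last by move: nek; lia.
  have [-> | nek'] := eqVneq (k0 + 1) (vsum m); first by rewrite !isXist_lead ?subrr.
  rewrite (isXist_moments hXs') ?vsum_addej; last by move: nek'; lia.
  by rewrite (isXist_moments hXs) ?subrr //; move: nek nek'; lia.
have := Xi_moments_eq0 hCk hNk hY hL i (t - 1).
by rewrite /Y subrK /zmul => /subr2_eq0 ->; rewrite addrK.
Qed.

Definition rho (P : int -> F) (X : 'I_r -> int -> F) n m (j : 'I_r) : F :=
  Lw c j (- vsum m) (vsum n) P (n j) * X j (- n j).

Lemma rho_eq0 n m P X j : inC n m -> isXi c n m X -> ~~ inC (subej n j) m -> rho P X n m j = 0.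
Proof.
move=> hC hX; rewrite inC_subej // -leNgt => hj.
by rewrite /rho (isXi_span hX) ?mulr0 //; apply/orP; right; lia.
Qed.

Lemma rho_mul_Phi_moment n m P X PM j : inC n m -> 0 < n j + m j ->
  isXi c n m X -> isPhi c (subej n j) m PM ->
  rho P X n m j * Lw c j (- vsum m) (vsum n - 1) PM (n j - 1)
    = Lw c j (- vsum m) (vsum n) P (n j).
Proof.
move=> hC hj hX hPM; have := Xi_coef_moment hC hj hPM hX.
by rewrite vsum_subej /rho -mulrA => ->; rewrite mulr1.
Qed.

Lemma rho_mul_XiP_coef n m P X XP j : inC n m ->
  isPhi c n m P -> isXi c (addej n j) m XP ->
  rho P X n m j * XP j (- n j - 1) = X j (- n j).
Proof.
move=> /[dup] hC /forallP/(_ j) hj hP hXP.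
have hj' : 0 < addej n j j + m j by rewrite addej_eq; lia.
have := Xi_coef_moment (inC_addej j hC) hj' (isPhi_ext (fsym (addejK n j)) hP) hXP.
rewrite addej_eq vsum_subej vsum_addej !addrK opprD /rho => E.
by rewrite mulrAC [_ * XP j _]mulrC E mul1r.
Qed.

Lemma Phi_recurrence n m P Ps X PM : inC n m -> normal c n m ->
  isPhi c n m P -> isPhist c n m Ps -> isXi c n m X ->
  (forall j, inC (subej n j) m -> isPhi c (subej n j) m (PM j)) ->
  (forall j, ~~ inC (subej n j) m -> forall t, PM j t = 0) ->
  forall t, P t = P (- vsum m) * Ps t + \sum_(j < r) rho P X n m j * zmul (PM j) t.
Proof.
move=> hC hN [Ph P1 PL] [Sh S1 SL] hX hPM hPM0 t.
have PMS j : in_span (- vsum m) (vsum n - 1) (PM j).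
  have [hj | hj] := boolP (inC (subej n j) m); last by move=> i _; apply: hPM0.
  by have [+ _ _] := hPM j hj; rewrite vsum_subej.
have PML j j0 k0 : - m j0 <= k0 <= n j0 - 1 -> (j0 != j) || (k0 != n j0 - 1) ->
    Lw c j0 (- vsum m) (vsum n - 1) (PM j) k0 = 0.
  move=> hk0 hne; have [hj | hj] := boolP (inC (subej n j) m); last exact/Lw_eq0/hPM0.
  have [_ _] := hPM j hj; rewrite vsum_subej; apply; rewrite subejE.
  by move: hne; case: eqVneq => /= _; lia.
pose q i := P (i + 1) - P (- vsum m) * Ps (i + 1) - \sum_(j < r) rho P X n m j * PM j i.
have hq : in_span (- vsum m) (vsum n - 1) q.
  move=> i hi; rewrite /q big1 ?subr0 => [|j _]; last by rewrite PMS ?mulr0.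
  have [-> | ne] := eqVneq (i + 1) (- vsum m); first by rewrite S1 mulr1 subrr.
  by rewrite Ph ?Sh ?mulr0 ?subrr //; move: hi ne; lia.
have hL j0 k0 : - m j0 <= k0 <= n j0 - 1 -> Lw c j0 (- vsum m) (vsum n - 1) q k0 = 0.
  move=> hk0; rewrite -(@Lw_span _ _ c j0 (- vsum m - 1) (vsum n - 1) _ _ q k0 hq); [ | lia ..].
  rewrite !LwB LwZ Lw_sum (Lw_shift c _ _ Ph) ?(Lw_shift c _ _ Sh); [ | lia ..].
  rewrite SL ?mulr0 ?subr0; last lia.
  rewrite (eq_bigr (fun j => rho P X n m j * Lw c j0 (- vsum m) (vsum n - 1) (PM j) k0));
    last by move=> j _; rewrite LwZ (Lw_span c _ _ (PMS j)) //; lia.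
  have [ek | nek] := eqVneq k0 (n j0 - 1); last first.
    by rewrite PL ?sub0r ?big1 ?oppr0 // => [j _|]; rewrite ?PML ?mulr0 ?nek ?orbT //; lia.
  have hj0 : 0 < n j0 + m j0 by lia.
  rewrite (bigD1 j0) //= big1 ?addr0 => [|j nj]; last by rewrite PML ?mulr0 // eq_sym nj.
  by rewrite ek subrK rho_mul_Phi_moment ?subrr //; apply: hPM; rewrite inC_subej.
have := Phi_moments_eq0 hC hN hq hL (t - 1).
by rewrite /q subrK => /subr2_eq0.
Qed.

Lemma Xi_recurrence n m P Ps X Xs XP : inC n m -> normal c n m ->
  isPhi c n m P -> isPhist c n m Ps -> isXi c n m X -> isXist c n m Xs ->
  (forall j, isXi c (addej n j) m (XP j)) ->
  forall i t, X i t = - Ps (vsum n) * Xs i t + \sum_(j < r) rho P X n m j * zmul (XP j i) t.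
Proof.
move=> hC hN hP hPs hX hXs hXP i t.
have XS := isXi_span hX; have XsS := isXist_span hXs.
have XPS j := isXi_span (hXP j).
pose G l x := X l (x + 1) + Ps (vsum n) * Xs l (x + 1) - \sum_(j < r) rho P X n m j * XP j l x.
have hG l : in_span (- n l) (m l - 1) (G l).
  move=> x hx; rewrite /G XsS ?mulr0 ?addr0; last by move: hx; lia.
  have [ex | nex] := eqVneq x (- n l - 1).
    rewrite (bigD1 l) //= big1 ?addr0 => [|j nj].
      by rewrite ex subrK (rho_mul_XiP_coef _ hC hP (hXP l)) subrr.
    by rewrite XPS ?mulr0 // addej_neq 1?eq_sym //; lia.
  rewrite XS ?sub0r ?big1 ?oppr0 // => [j _|]; last by move: hx nex; lia.
  by rewrite XPS ?mulr0 //; have := addej_le n j l; move: hx nex; lia.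
have hL k0 : - vsum n <= k0 <= vsum m - 1 ->
    Lvec c (fun l => - n l) (fun l => m l - 1) G k0 = 0.
  move=> hk0; have nA : ~~ antidiag n m by apply/negP => /vsum_antidiag; lia.
  rewrite -(@Lvec_span _ _ c (fun l => - n l - 1) (fun l => m l - 1) _ _ G k0 hG);
    [ | by move=> l /=; lia ..].
  rewrite LvecB LvecD LvecZ Lvec_sum (Lvec_shift c _ XS) ?(Lvec_shift c _ XsS);
    [ | by move=> l /=; lia ..].
  rewrite big1 ?subr0 => [|j _]; last first.
    rewrite LvecZ (Lvec_span c _ (XPS j)) => [|l|l] /=; last by rewrite lexx.
      by rewrite (isXi_moments (hXP j)) ?mulr0 // vsum_addej; lia.
    by have := addej_le n j l; lia.
  have [ek | nek] := eqVneq (k0 + 1) (vsum m).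
    by rewrite ek (Xi_moment_vsum hC nA hPs hX) isXist_lead // mulr1 addNr.
  by rewrite (isXi_moments hX) ?(isXist_moments hXs) ?mulr0 ?addr0 //; move: nek; lia.
have := Xi_moments_eq0 hC hN hG hL i (t - 1).
by rewrite /G subrK /zmul => /subr0_eq <-; rewrite mulNr addrC addrK.
Qed.

End Recurrences.

Unset Implicit Arguments.

Theorem theorem5p1 (F : fieldType) (r : nat) (c : int -> 'I_r -> F)
    (n m : 'I_r -> int)
    (Phi Phist : int -> F) (Xi Xist : 'I_r -> int -> F)
    (PhiM PhistM : 'I_r -> int -> F)
    (XiP XistP : 'I_r -> 'I_r -> int -> F) :
  inC n m ->
  normal c n m ->
  (forall j, normal c (addej n j) m) ->
  (forall j, inC (subej n j) m -> normal c (subej n j) m) ->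
  isPhi c n m Phi -> isPhist c n m Phist ->
  isXi c n m Xi -> isXist c n m Xist ->
  (forall j, inC (subej n j) m ->
     isPhi c (subej n j) m (PhiM j) /\ isPhist c (subej n j) m (PhistM j)) ->
  (forall j, ~~ inC (subej n j) m -> forall t, PhiM j t = 0) ->
  (forall j, isXi c (addej n j) m (XiP j) /\ isXist c (addej n j) m (XistP j)) ->
  let alpha := Phi (- vsum m) in
  let beta := Phist (vsum n) in
  (* (a) *)
  (forall k, inC (subej n k) m ->
     forall t, Phist t = PhistM k t + beta * zmul (PhiM k) t) /\
  (* (b) *)
  (forall k i t, Xist i t = XistP k i t - alpha * zmul (XiP k i) t) /\
  (* (c) *)
  (exists rho : 'I_r -> F,
     [/\ forall j, ~~ inC (subej n j) m -> rho j = 0,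
         forall t, Phi t = alpha * Phist t + \sum_(j < r) rho j * zmul (PhiM j) t &
         forall i t, Xi i t = - beta * Xist i t
                              + \sum_(j < r) rho j * zmul (XiP j i) t]).
Proof.
move=> hC hN hNa hNs hP hPs hX hXs hM hM0 hXP alpha beta.
split; [|split].
- by move=> k hk; have [hPk hPsk] := hM k hk; apply: Phist_recurrence hk (hNs k hk) hPs hPk hPsk.
- by move=> k; have [hXk hXsk] := hXP k; apply: Xist_recurrence hC (hNa k) hP hXs hXk hXsk.
exists (rho c Phi Xi n m); split.
- by move=> j; apply: rho_eq0.
- by apply: (Phi_recurrence hC hN hP hPs hX) => // j /hM [].
- by apply: (Xi_recurrence hC hN hP hPs hX hXs) => j; have [] := hXP j.
Qed.
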